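(* Let $\mathbf S$ be a complete semilattice. Then the set $\Gamma$ of all non-generators of $\mathbf S$ is a complete subsemilattice of $\mathbf S$, and $\Gamma$ equals the intersection of all maximal proper complete subsemilattices of $\mathbf S$ (this intersection being $S$ itself if there are no maximal proper complete subsemilattices).
   Context: A complete semilattice is a partially ordered set $S$ in which every subset, including the empty set, has a meet (infimum) $\bigwedge$; in particular $S$ has a maximum. A complete subsemilattice of $\mathbf S$ is a subset $T\subseteq S$ such that for every $Y\subseteq T$ (including $Y=\emptyset$, so $T$ contains the maximum of $S$) the meet $\bigwedge Y$ computed in $S$ lies in $T$. For $X\subseteq S$, $\langle X\rangle$ denotes the complete subsemilattice generated by $X$, i.e. the intersection of all complete subsemilattices containing $X$, and $\langle X,a\rangle=\langle X\cup\{a\}\rangle$. An element $a\in S$ is a non-generator if for every $X\subseteq S$, $\langle X,a\rangle=S$ implies $\langle X\rangle=S$; otherwise $a$ is a relative generator. A maximal proper complete subsemilattice is a complete subsemilattice $T\neq S$ not properly contained in any complete subsemilattice other than $S$. *)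

Definition subset {T : Type} (A B : T -> Prop) : Prop := forall x, A x -> B x.

Definition full {T : Type} (A : T -> Prop) : Prop := forall x, A x.

Definition partial_order {T : Type} (le : T -> T -> Prop) : Prop :=
  (forall x, le x x) /\
  (forall x y, le x y -> le y x -> x = y) /\
  (forall x y z, le x y -> le y z -> le x z).

Definition is_meet {T : Type} (le : T -> T -> Prop) (Y : T -> Prop) (m : T) : Prop :=
  (forall y, Y y -> le m y) /\ (forall z, (forall y, Y y -> le z y) -> le z m).

Definition complete_semilattice {T : Type} (le : T -> T -> Prop) : Prop :=
  partial_order le /\ forall Y : T -> Prop, exists m, is_meet le Y m.

(* A is closed under all meets computed in S (Y = empty gives the maximum) *)
Definition complete_subsemilattice {T : Type} (le : T -> T -> Prop) (A : T -> Prop) : Prop :=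
  forall Y : T -> Prop, subset Y A -> forall m, is_meet le Y m -> A m.

Definition generated {T : Type} (le : T -> T -> Prop) (X : T -> Prop) : T -> Prop :=
  fun x => forall A, complete_subsemilattice le A -> subset X A -> A x.

Definition add_elt {T : Type} (X : T -> Prop) (a : T) : T -> Prop :=
  fun x => X x \/ x = a.

Definition non_generator {T : Type} (le : T -> T -> Prop) (a : T) : Prop :=
  forall X : T -> Prop, full (generated le (add_elt X a)) -> full (generated le X).

Definition maximal_proper_css {T : Type} (le : T -> T -> Prop) (M : T -> Prop) : Prop :=
  complete_subsemilattice le M /\ ~ full M /\
  forall B, complete_subsemilattice le B -> subset M B -> subset B M \/ full B.

Definition non_generators {T : Type} (le : T -> T -> Prop) : T -> Prop :=
  fun a => non_generator le a.

Definition meet_of_maximals {T : Type} (le : T -> T -> Prop) : T -> Prop :=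
  fun x => forall M, maximal_proper_css le M -> M x.

From Stdlib Require Import Classical.

(* A non-generator lies in every maximal proper complete subsemilattice M,
   since otherwise <M, a> would be all of S while <M> = M is not.  Conversely,
   if a lies in every such M but <X, a> = S with C := <X> proper, then
   a is not in C and C together with the down-set of a is a complete
   subsemilattice containing X and a, hence everything lies in C or below a.
   A meet of elements different from a that equals a must then be a meet of
   elements of C, so S minus a is a complete subsemilattice; it is
   automatically maximal proper, and it misses a.  Finally, the non-generators
   form an intersection of complete subsemilattices, hence one. *)

Section CompleteSubsemilattices.

Variables (T : Type) (le : T -> T -> Prop).

Lemma css_intersection (P : (T -> Prop) -> Prop) :
  (forall M, P M -> complete_subsemilattice le M) ->
  complete_subsemilattice le (fun x => forall M, P M -> M x).
Proof.
  intros HP Y HY m Hm M HM.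
  apply (HP M HM Y); [intros y Hy; apply (HY y Hy M HM) | exact Hm].
Qed.

Lemma generated_css (X : T -> Prop) : complete_subsemilattice le (generated le X).
Proof.
  intros Y HY m Hm A HA HXA.
  apply (HA Y); [intros y Hy; apply (HY y Hy A HA HXA) | exact Hm].
Qed.

Lemma subset_generated (X : T -> Prop) : subset X (generated le X).
Proof. intros x Hx A _ HXA. apply HXA, Hx. Qed.

Lemma generated_min (X A : T -> Prop) :
  complete_subsemilattice le A -> subset X A -> subset (generated le X) A.
Proof. intros HA HXA x Hx. apply Hx; assumption. Qed.

Lemma css_union_downset (C : T -> Prop) (a : T) :
  (forall x y z, le x y -> le y z -> le x z) ->
  complete_subsemilattice le C ->
  complete_subsemilattice le (fun s => C s \/ le s a).
Proof.
  intros Htrans HC Y HY m [Hlb Hglb].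
  destruct (classic (exists y, Y y /\ ~ C y)) as [[y [Hy HyC]] | HnoY].
  - right. destruct (HY y Hy) as [HCy | Hya]; [contradiction |].
    apply Htrans with y; auto.
  - left. apply (HC Y); [| split; assumption].
    intros y Hy. apply NNPP. intro HCy. apply HnoY. exists y. auto.
Qed.

Lemma css_remove_point (C : T -> Prop) (a : T) :
  (forall x y, le x y -> le y x -> x = y) ->
  complete_subsemilattice le C -> ~ C a -> (forall s, C s \/ le s a) ->
  complete_subsemilattice le (fun s => s <> a).
Proof.
  intros Hanti HC HCa Hsplit Y HY m Hm Hma. subst m.
  apply HCa, (HC Y); [| exact Hm].
  intros y Hy. destruct (Hsplit y) as [HCy | Hya]; [exact HCy |].
  exfalso. apply (HY y Hy), Hanti; [exact Hya | apply (proj1 Hm y Hy)].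
Qed.

Lemma maximal_complement_point (a : T) :
  complete_subsemilattice le (fun s => s <> a) ->
  maximal_proper_css le (fun s => s <> a).
Proof.
  intros Hcss. split; [exact Hcss | split].
  - intro Hfull. exact (Hfull a eq_refl).
  - intros B _ HsB. destruct (classic (B a)) as [HBa | HBa].
    + right. intro x. destruct (classic (x = a)) as [-> | Hxa]; auto.
    + left. intros x Hx ->. contradiction.
Qed.

Lemma non_generator_in_maximal (a : T) (M : T -> Prop) :
  non_generator le a -> maximal_proper_css le M -> M a.
Proof.
  intros Hng [HM [HnfM Hmax]]. apply NNPP. intro HMa.
  assert (HMa_sub : subset M (generated le (add_elt M a))).
  { intros x Hx. apply subset_generated. left. exact Hx. }
  destruct (Hmax _ (generated_css _) HMa_sub) as [Hback | Hfull].
  - apply HMa, Hback, subset_generated. right. reflexivity.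
  - apply HnfM. intro x. apply (generated_min M M HM (fun y Hy => Hy)), (Hng M Hfull).
Qed.

Lemma in_all_maximals_non_generator (a : T) :
  partial_order le -> meet_of_maximals le a -> non_generator le a.
Proof.
  intros [Hrefl [Hanti Htrans]] Hmaxs X Hfull. apply NNPP. intro HnfX.
  assert (HaX : ~ generated le X a).
  { intro HaX. apply HnfX. intro x.
    apply (generated_min (add_elt X a) _ (generated_css X)); [| apply Hfull].
    intros y [Hy | ->]; [apply subset_generated, Hy | exact HaX]. }
  assert (Hsplit : forall s, generated le X s \/ le s a).
  { intro s. apply (generated_min (add_elt X a) (fun s => generated le X s \/ le s a));
      [| | apply Hfull].
    - apply css_union_downset; [exact Htrans | apply generated_css].
    - intros y [Hy | ->]; [left; apply subset_generated, Hy | right; apply Hrefl]. }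
  apply (Hmaxs (fun s => s <> a)); [| reflexivity].
  apply maximal_complement_point, (css_remove_point (generated le X));
    [exact Hanti | apply generated_css | exact HaX | exact Hsplit].
Qed.

End CompleteSubsemilattices.

Theorem proposition1 (T : Type) (le : T -> T -> Prop)
  (hS : complete_semilattice le) :
  complete_subsemilattice le (non_generators le) /\
  (forall x, non_generators le x <-> meet_of_maximals le x).
Proof.
  assert (Heq : forall x, non_generators le x <-> meet_of_maximals le x).
  { intro x. split.
    - intros Hng M HM. exact (non_generator_in_maximal _ _ _ _ Hng HM).
    - apply in_all_maximals_non_generator, (proj1 hS). }
  assert (Hcss : complete_subsemilattice le (meet_of_maximals le))
    by exact (css_intersection T le (maximal_proper_css le) (fun M HM => proj1 HM)).
  split; [| exact Heq].
  intros Y HY m Hm. apply Heq, (Hcss Y); [| exact Hm].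
  intros y Hy. apply Heq, HY, Hy.
Qed.
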